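(* Let $a>0$ and $T>0$, let $c=\ln 2$, and let $W_0$ denote the principal branch of the Lambert W function. For $\lambda>0$ define $$P(\lambda)=\frac{2}{\lambda c^2}\,W_0\!\left(\frac{\lambda c^2}{2a}\,2^{T}\right)-\frac1a.$$ Then $P(\lambda)$ is strictly decreasing in $\lambda$ on $(0,\infty)$.
   Context: The Lambert W function is the inverse relation of $w\mapsto we^w$; its principal branch $W_0$ is the real-valued branch on $[-1/e,\infty)$ with $W_0\ge -1$, so for $z\ge 0$, $W_0(z)$ is the unique $w\ge 0$ with $we^w=z$. *)

From Stdlib Require Import Reals ClassicalEpsilon.
Open Scope R_scope.

(* Principal branch W_0 of the Lambert W function on [-1/e, +oo):
   W_0 z is the (unique) w >= -1 with w * exp w = z.  Defined by Hilbert's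
   epsilon; its value outside [-1/e, +oo) is irrelevant/unspecified. *)
Definition LambertW0 (z : R) : R :=
  epsilon (inhabits 0%R) (fun w : R => -1 <= w /\ w * exp w = z).

Definition P (a T lambda : R) : R :=
  let c := ln 2 in
  2 / (lambda * c ^ 2) * LambertW0 (lambda * c ^ 2 / (2 * a) * Rpower 2 T) - 1 / a.

From Stdlib Require Import Reals Lra ClassicalEpsilon.
Open Scope R_scope.

(* Since [W x * exp (W x) = x], the quotient [W x / x] equals [exp (- W x)],
   which decreases because [W] increases.  With [k = c^2 2^T / (2a)] one has
   [P a T l = 2 k / c^2 * (W (l k) / (l k)) - 1/a], hence [P] decreases in [l]. *)

Lemma xexp_surjective_pos (x : R) : 0 < x -> exists w, -1 <= w /\ w * exp w = x.
Proof.
  intros hx.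
  destruct (IVT (fun w => w * exp w - x) 0 x) as [w [hw_range hw_root]].
  - apply continuity_minus; [| apply continuity_const; intros ? ?; reflexivity].
    apply continuity_mult; apply derivable_continuous;
      [apply derivable_id | apply derivable_exp].
  - exact hx.
  - rewrite Rmult_0_l; lra.
  - assert (1 < exp x) by (rewrite <- exp_0; apply exp_increasing; lra).
    assert (x * 1 < x * exp x) by (apply Rmult_lt_compat_l; lra).
    lra.
  - exists w; split; lra.
Qed.

Lemma LambertW0_pos_spec (x : R) :
  0 < x -> 0 < LambertW0 x /\ LambertW0 x * exp (LambertW0 x) = x.
Proof.
  intros hx.
  destruct (epsilon_spec (inhabits 0) (fun w => -1 <= w /\ w * exp w = x)
              (xexp_surjective_pos x hx)) as [_ hW].
  fold (LambertW0 x) in hW.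
  split; [| exact hW].
  assert (0 < exp (LambertW0 x)) by apply exp_pos.
  destruct (Rle_or_lt (LambertW0 x) 0) as [hle | hgt]; [nra | exact hgt].
Qed.

Lemma LambertW0_lt (x1 x2 : R) :
  0 < x1 -> x1 < x2 -> LambertW0 x1 < LambertW0 x2.
Proof.
  intros hx1 hx12.
  destruct (LambertW0_pos_spec x1 hx1) as [hW1 e1].
  destruct (LambertW0_pos_spec x2 ltac:(lra)) as [hW2 e2].
  destruct (Rlt_or_le (LambertW0 x1) (LambertW0 x2)) as [hlt | hge]; [exact hlt |].
  assert (exp (LambertW0 x2) <= exp (LambertW0 x1))
    by (destruct hge as [hgt | ->]; [left; apply exp_increasing | right]; auto).
  assert (LambertW0 x2 * exp (LambertW0 x2) <= LambertW0 x1 * exp (LambertW0 x1))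
    by (apply Rmult_le_compat; lra || (left; apply exp_pos)).
  lra.
Qed.

Lemma LambertW0_div_self (x : R) : 0 < x -> LambertW0 x / x = / exp (LambertW0 x).
Proof.
  intros hx.
  destruct (LambertW0_pos_spec x hx) as [hpos hW].
  assert (0 < exp (LambertW0 x)) by apply exp_pos.
  rewrite <- hW at 2; field; lra.
Qed.

Lemma LambertW0_div_self_decreasing (x1 x2 : R) :
  0 < x1 -> x1 < x2 -> LambertW0 x2 / x2 < LambertW0 x1 / x1.
Proof.
  intros hx1 hx12.
  rewrite (LambertW0_div_self x1 hx1), (LambertW0_div_self x2 ltac:(lra)).
  apply Rinv_lt_contravar.
  - apply Rmult_lt_0_compat; apply exp_pos.
  - apply exp_increasing, LambertW0_lt; assumption.
Qed.

Lemma P_eq (a T l : R) : 0 < a -> 0 < l ->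
  let k := ln 2 ^ 2 / (2 * a) * Rpower 2 T in
  P a T l = 2 * k / ln 2 ^ 2 * (LambertW0 (l * k) / (l * k)) - 1 / a.
Proof.
  intros ha hl k.
  assert (hc : 0 < ln 2) by (rewrite <- ln_1; apply ln_increasing; lra).
  assert (0 < Rpower 2 T) by apply exp_pos.
  unfold P, k.
  replace (l * ln 2 ^ 2 / (2 * a) * Rpower 2 T)
    with (l * (ln 2 ^ 2 / (2 * a) * Rpower 2 T)) by (field; lra).
  field; repeat split; try lra; apply pow_nonzero; lra.
Qed.

Theorem lemma1 (a T : R) (ha : 0 < a) (hT : 0 < T) :
  forall l1 l2 : R, 0 < l1 -> l1 < l2 -> P a T l2 < P a T l1.
Proof.
  intros l1 l2 hl1 hl12.
  rewrite (P_eq a T l1 ha hl1), (P_eq a T l2 ha ltac:(lra)).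
  set (k := ln 2 ^ 2 / (2 * a) * Rpower 2 T).
  assert (hc : 0 < ln 2) by (rewrite <- ln_1; apply ln_increasing; lra).
  assert (hk : 0 < k).
  { apply Rmult_lt_0_compat; [| apply exp_pos].
    apply Rdiv_lt_0_compat; [apply pow_lt |]; lra. }
  apply Rplus_lt_compat_r, Rmult_lt_compat_l.
  - apply Rdiv_lt_0_compat; [| apply pow_lt]; lra.
  - apply LambertW0_div_self_decreasing; [| apply Rmult_lt_compat_r]; nra.
Qed.
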